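(* Let $S$ be the basic spinor representation of $Spin(3)$, realized as a $2$-dimensional irreducible left module over the complex Clifford algebra $\mathbb C_3$ (generated by $e_1,e_2,e_3$ with $e_je_l+e_le_j=-2\delta_{jl}$, $e_{ij}=e_ie_j$), and let $v^{+}\in S$ be nonzero with $-ie_{12}v^{+}=v^{+}$. Put $z=x_1+ix_2$, $\overline z=x_1-ix_2$, $\frac{\partial}{\partial z}=\frac12(\partial_{x_1}-i\partial_{x_2})$, $\frac{\partial}{\partial \overline z}=\frac12(\partial_{x_1}+i\partial_{x_2})$, $X^{-}=2x_3\frac{\partial}{\partial\overline z}- z\frac{\partial}{\partial x_3}$, $\omega^-=\frac12(-e_{31}+ie_{23})$ (acting by left multiplication on $S$-valued polynomials), and $\tilde X^-=X^-+\omega^-$. For $k\in\mathbb N_0$ let $f^k_0=\frac{1}{k!2^k}\overline z^k$, $f^k_j=(X^-)^jf^k_0$ for $0<j\le 2k$, $f^k_{-1}=f^k_{2k+1}=0$, and $F^k_0=\frac{1}{k!2^k}\overline z^kv^+$, $F^k_j=(\tilde X^-)^jF^k_0$ for $0<j\le 2k+1$, $F^k_{-1}=0$. Then: (a) As operators on $S$-valued polynomials, $(\tilde X^-)^j=(X^-)^j+j(X^-)^{j-1}\omega^-$ for all $j\in\mathbb N$. In particular, for $j=0,\dots,2k+1$, $F^k_j=f^k_jv^+ + j f^k_{j-1}\,\omega^-v^+$. (b) $\big[\frac{\partial}{\partial x_3},(\tilde X^-)^j\big]=2j(\tilde X^-)^{j-1}\frac{\partial}{\partial\overline z}$ for all $j\in\mathbb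 N$. In particular, for each $k\in\mathbb N$, $$\frac{\partial F^k_j}{\partial x_3}=\begin{cases} j\,F^{k-1}_{j-1}, & j=1,\dots,2k,\\ 0, & j=0,\,2k+1.\end{cases}$$ (c) $[x_3,(\tilde X^-)^j]=j(\tilde X^-)^{j-1}z$ for all $j\in\mathbb N$ (where $x_3$ and $z$ act by multiplication). In particular, for each $k\in\mathbb N_0$ and $j=0,1,\dots,2k+1$, $$F^{k+1}_{j+1}=x_3F^k_j-jzF^k_{j-1}+\omega^-F^{k+1}_j.$$
   Context: Here $[A,B]=AB-BA$. The polynomials $f^k_j$ ($j=0,\dots,2k$) form the canonical weight basis of the space of complex $k$-homogeneous harmonic polynomials on $\mathbb R^3$, and $F^k_j$ ($j=0,\dots,2k+1$) form the canonical weight basis of the space of $S$-valued $k$-homogeneous polynomials $P$ with $(e_1\partial_{x_1}+e_2\partial_{x_2}+e_3\partial_{x_3})P=0$. *)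

From HB Require Import structures.
From mathcomp Require Import all_boot all_order all_algebra all_field.
From mathcomp Require Import mpoly.
Set Implicit Arguments. Unset Strict Implicit. Unset Printing Implicit Defensive.
Import Order.TTheory GRing.Theory Num.Theory.
Local Open Scope ring_scope.

(* complex polynomials in x1 = 'X_0, x2 = 'X_1, x3 = 'X_2 *)
Definition Pol := {mpoly algC[3]}.
(* S-valued polynomials, S = C^2 (column vectors); Clifford generators act by 2x2 matrices *)
Definition SPol := 'cV[Pol]_2.

Definition i0 : 'I_3 := @Ordinal 3 0 isT.
Definition i1 : 'I_3 := @Ordinal 3 1 isT.
Definition i2 : 'I_3 := @Ordinal 3 2 isT.

Definition x3 : Pol := 'X_i2.
Definition zp : Pol := 'X_i0 + 'i%:MP * 'X_i1.
Definition zbp : Pol := 'X_i0 - 'i%:MP * 'X_i1.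

Definition dzb (p : Pol) : Pol := (2^-1)%:MP * (mderiv i0 p + 'i%:MP * mderiv i1 p).
Definition d3 (p : Pol) : Pol := mderiv i2 p.

Definition Xm (p : Pol) : Pol := 2%:MP * x3 * dzb p - zp * d3 p.

Definition f0 (k : nat) : Pol := ((k`!)%:R * 2 ^+ k)^-1%:MP * zbp ^+ k.
Definition fk (k j : nat) : Pol := if (j <= 2 * k)%N then iter j Xm (f0 k) else 0.

Definition liftop (op : Pol -> Pol) (V : SPol) : SPol := map_mx op V.
Definition cst (v : 'cV[algC]_2) : SPol := map_mx (fun c => c%:MP) v.
Definition act (M : 'M[algC]_2) (V : SPol) : SPol := map_mx (fun c => c%:MP) M *m V.

Definition omegam (E : 'I_3 -> 'M[algC]_2) : 'M[algC]_2 :=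
  2^-1 *: (- (E i2 *m E i0) + 'i *: (E i1 *m E i2)).

Definition Xt (E : 'I_3 -> 'M[algC]_2) (V : SPol) : SPol := liftop Xm V + act (omegam E) V.

Definition Fk (E : 'I_3 -> 'M[algC]_2) (v : 'cV[algC]_2) (k j : nat) : SPol :=
  iter j (Xt E) (f0 k *: cst v).

From HB Require Import structures.
From mathcomp Require Import all_boot all_order all_algebra all_field.
From mathcomp Require Import mpoly.
From mathcomp Require Import ring zify.
Import Order.TTheory GRing.Theory Num.Theory.
Local Open Scope ring_scope.

(* The Clifford relations give (omega^-)^2 = 0, and omega^- (acting on the
   spinor factor) commutes with the scalar operator X^-; so the binomial
   expansion of (X^- + omega^-)^j stops after its first two terms, which is (a).
   For (b) and (c) one only needs [d/dx3, tilde X^-] = 2 d/dzbar and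
   [x3, tilde X^-] = z, two operators commuting with tilde X^-: then
   [D, C^j] = j C^(j-1) [D, C] by induction on j.  The particular formulas
   follow from X^- f^(k+1)_0 = x3 f^k_0, 2 d/dzbar f^(k+1)_0 = f^k_0,
   d/dx3 f^k_0 = 0 and (X^-)^(2k+1) zbar^k = 0. *)

Lemma iter_commute {T : Type} {g h : T -> T} :
  (forall x, h (g x) = g (h x)) -> forall n x, iter n h (g x) = g (iter n h x).
Proof. by move=> hg; elim=> //= n IHn x; rewrite IHn hg. Qed.

Section AdditiveIteration.
Context {T : zmodType} {f : T -> T}.
Hypothesis fD : {morph f : x y / x + y}.

Lemma morphD0 : f 0 = 0.
Proof. by apply: (@addrI _ (f 0)); rewrite -fD !addr0. Qed.

Lemma morphDN x : f (- x) = - f x.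
Proof. by apply: (@addrI _ (f x)); rewrite -fD !subrr morphD0. Qed.

Lemma morphDMn x m : f (x *+ m) = f x *+ m.
Proof. by elim: m => [|m IHm]; rewrite ?mulr0n ?morphD0 // !mulrS fD IHm. Qed.

Lemma iter_morphD n : {morph iter n f : x y / x + y}.
Proof. by elim: n => //= n IHn x y /=; rewrite IHn fD. Qed.

Lemma iter_morphD0 n : iter n f 0 = 0.
Proof. by elim: n => //= n ->; rewrite morphD0. Qed.

Lemma iter_morphDMn n x m : iter n f (x *+ m) = iter n f x *+ m.
Proof. by elim: n => //= n ->; rewrite morphDMn. Qed.

Lemma iter_morphD_eq0 m n x : (m <= n)%N -> iter m f x = 0 -> iter n f x = 0.
Proof. by move=> /subnK <- fx0; rewrite iterD fx0 iter_morphD0. Qed.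

End AdditiveIteration.

Lemma iter_add_nilpotent {T : zmodType} {A B C : T -> T} :
  {morph A : x y / x + y} -> {morph B : x y / x + y} ->
  (forall x, A (B x) = B (A x)) -> (forall x, B (B x) = 0) ->
  (forall x, C x = A x + B x) ->
  forall j x, iter j C x = iter j A x + iter j.-1 A (B x) *+ j.
Proof.
move=> AD BD AB BB CE; elim=> [|j IHj] x /=; first by rewrite mulr0n addr0.
rewrite IHj CE AD BD (morphDMn AD) (morphDMn BD) -!(iter_commute AB) BB.
rewrite (iter_morphD0 AD) mul0rn addr0.
case: j {IHj} => [|j] /=; first by rewrite !mulr0n !addr0 mulr1n.
by rewrite -addrA -mulrSr.
Qed.

Lemma iter_commutator {T : zmodType} {C D H : T -> T} :
  {morph C : x y / x + y} ->
  (forall x, D (C x) = C (D x) + H x) -> (forall x, C (H x) = H (C x)) ->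
  forall j x, D (iter j C x) = iter j C (D x) + iter j.-1 C (H x) *+ j.
Proof.
move=> CD DC CH; elim=> [|j IHj] x /=; first by rewrite mulr0n addr0.
rewrite DC IHj CD (morphDMn CD) -(iter_commute CH).
case: j {IHj} => [|j] /=; first by rewrite mulr0n addr0 mulr1n.
by rewrite -addrA -mulrSr.
Qed.

Section Derivation.
Context {R : comRingType} {D : R -> R}.
Hypotheses (DD : {morph D : p q / p + q})
  (DM : forall p q, D (p * q) = D p * q + p * D q).

Lemma derivation1 : D 1 = 0.
Proof.
have := DM 1 1; rewrite !mul1r mulr1 => D1E.
by apply: (@addrI _ (D 1)); rewrite addr0 -D1E.
Qed.

Lemma derivationX p n : D (p ^+ n.+1) = (p ^+ n * D p) *+ n.+1.
Proof.
elim: n => [|n IHn]; first by rewrite expr0 mul1r expr1.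
by rewrite exprS DM IHn mulrnAr mulrA -exprS [D p * _]mulrC [RHS]mulrS.
Qed.

Lemma iter_derivationM_eq0 a b p q :
  iter a.+1 D p = 0 -> iter b.+1 D q = 0 -> iter (a + b).+1 D (p * q) = 0.
Proof.
have [n] := ubnP (a + b); elim: n a b p q => [|n IHn] a b p q //.
move=> lt_ab_n Dp0 Dq0; rewrite iterSr DM (iter_morphD DD).
have -> : iter (a + b) D (D p * q) = 0.
  case: a lt_ab_n Dp0 => [/= _ ->|a lt_ab_n Dp0]; first by rewrite mul0r (iter_morphD0 DD).
  by rewrite addSn; apply: IHn; rewrite -?iterSr //; lia.
case: b lt_ab_n Dq0 => [/= _ ->|b lt_ab_n Dq0].
  by rewrite mulr0 (iter_morphD0 DD) addr0.
by rewrite add0r addnS; apply: IHn; rewrite -?iterSr //; lia.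
Qed.

End Derivation.

Record mderivation (K : comRingType) (n : nat) (D : {mpoly K[n]} -> {mpoly K[n]}) :
  Prop := {
  mderivationD : {morph D : p q / p + q};
  mderivationCM : forall c p, D (c%:MP * p) = c%:MP * D p;
  mderivationM : forall p q, D (p * q) = D p * q + p * D q }.
Arguments mderivation {K n}.
Arguments mderivationD {K n D}.
Arguments mderivationCM {K n D}.
Arguments mderivationM {K n D}.

Section MDerivation.
Context {K : comRingType} {n : nat} {D : {mpoly K[n]} -> {mpoly K[n]}}.
Hypothesis hD : mderivation D.

Lemma mderivationB p q : D (p - q) = D p - D q.
Proof. by rewrite (mderivationD hD) (morphDN (mderivationD hD)). Qed.

Lemma mderivation_cst c : D c%:MP = 0.
Proof.
rewrite -[c%:MP]mulr1 (mderivationCM hD).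
by rewrite (derivation1 (mderivationM hD)) mulr0.
Qed.

Lemma mderivationX p k : D (p ^+ k.+1) = (p ^+ k * D p) *+ k.+1.
Proof. exact: (derivationX (mderivationM hD)). Qed.

End MDerivation.

Lemma mderiv_mderivation {K : comRingType} {n} (i : 'I_n) :
  mderivation (@mderiv n K i).
Proof. by split=> *; [exact: mderivD | exact: mderiv_mulC | exact: mderivM]. Qed.

Lemma mderivation_comb {K : comRingType} {n} {D1 D2 D : {mpoly K[n]} -> {mpoly K[n]}}
    (a b : {mpoly K[n]}) :
  mderivation D1 -> mderivation D2 -> (forall p, D p = a * D1 p + b * D2 p) ->
  mderivation D.
Proof.
move=> [D1D D1C D1M] [D2D D2C D2M] DE; split=> [p q|c p|p q]; rewrite !DE.
- by rewrite D1D D2D; ring.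
- by rewrite D1C D2C; ring.
- by rewrite D1M D2M; ring.
Qed.

Lemma dzb_mderivation : mderivation dzb.
Proof.
apply: (mderivation_comb (2^-1%:MP) (2^-1%:MP * 'i%:MP)
  (mderiv_mderivation i0) (mderiv_mderivation i1)).
by move=> p; rewrite /dzb; ring.
Qed.

Lemma d3_mderivation : mderivation d3.
Proof. exact: mderiv_mderivation. Qed.

Lemma Xm_mderivation : mderivation Xm.
Proof.
apply: (mderivation_comb (2%:MP * x3) (- zp) dzb_mderivation d3_mderivation).
by move=> p; rewrite /Xm; ring.
Qed.

Lemma mderivX1 (i j : 'I_3) : mderiv i ('X_j : Pol) = (j == i)%:R.
Proof.
rewrite mderivX mnm1E; case: eqP => [->|_]; last by rewrite scale0r.
rewrite scale1r (_ : (U_(i) - U_(i))%MM = 0%MM) ?mpolyX0 //.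
by apply/mnmP=> l; rewrite mnmBE mnm0E subnn.
Qed.

Lemma mpolyCi_sqr : 'i%:MP * 'i%:MP = -1 :> Pol.
Proof. by rewrite -mpolyCM -expr2 sqrCi mpolyCN mpolyC1. Qed.

Lemma dzb_zbp : dzb zbp = 1.
Proof.
rewrite /dzb /zbp !mderivB !mderiv_mulC !mderivX1 /=.
rewrite mulr0 subr0 sub0r mulr1 mulrN mpolyCi_sqr opprK -mpolyC1 -mpolyCD -mpolyCM.
by rewrite mulVf // pnatr_eq0.
Qed.

Lemma dzb_zp : dzb zp = 0.
Proof.
rewrite /dzb /zp !mderivD !mderiv_mulC !mderivX1 /=.
by rewrite mulr0 addr0 add0r mulr1 mpolyCi_sqr subrr mulr0.
Qed.

Lemma dzb_x3 : dzb x3 = 0.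
Proof. by rewrite /dzb /x3 !mderivX1 /= mulr0 addr0 mulr0. Qed.

Lemma d3_x3 : d3 x3 = 1.
Proof. by rewrite /d3 /x3 mderivX1. Qed.

Lemma d3_zp : d3 zp = 0.
Proof. by rewrite /d3 /zp mderivD mderiv_mulC !mderivX1 /= mulr0 addr0. Qed.

Lemma d3_zbp : d3 zbp = 0.
Proof. by rewrite /d3 /zbp mderivB mderiv_mulC !mderivX1 /= mulr0 subr0. Qed.

Lemma Xm_zbp : Xm zbp = 2%:MP * x3.
Proof. by rewrite /Xm dzb_zbp d3_zbp mulr1 mulr0 subr0. Qed.

Lemma Xm_x3 : Xm x3 = - zp.
Proof. by rewrite /Xm dzb_x3 d3_x3 mulr1 mulr0 sub0r. Qed.

Lemma Xm_zp : Xm zp = 0.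
Proof. by rewrite /Xm dzb_zp d3_zp !mulr0 subr0. Qed.

Lemma d3_dzb p : d3 (dzb p) = dzb (d3 p).
Proof.
rewrite /d3 /dzb mderiv_mulC mderivD mderiv_mulC.
by rewrite (mderiv_comm i0) (mderiv_comm i1).
Qed.

Lemma d3_Xm p : d3 (Xm p) = Xm (d3 p) + dzb p *+ 2.
Proof.
have d3M := mderivationM d3_mderivation.
rewrite {1}/Xm (mderivationB d3_mderivation) (d3M (2%:MP * x3)) (d3M 2%:MP) (d3M zp).
rewrite (mderivation_cst d3_mderivation) d3_x3 d3_zp d3_dzb /Xm.
by rewrite mpolyC_nat -mulr_natl; ring.
Qed.

Lemma dzb_Xm p : dzb (Xm p) = Xm (dzb p).
Proof.
have dzbM := mderivationM dzb_mderivation.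
rewrite {1}/Xm (mderivationB dzb_mderivation) (dzbM (2%:MP * x3)) (dzbM 2%:MP) (dzbM zp).
rewrite (mderivation_cst dzb_mderivation) dzb_x3 dzb_zp -d3_dzb /Xm.
by ring.
Qed.

Lemma iter_Xm_zbpX k : iter (2 * k).+1 Xm (zbp ^+ k) = 0.
Proof.
have XmD := mderivationD Xm_mderivation.
elim: k => [|k IHk].
  by rewrite /= expr0 -mpolyC1 (mderivation_cst Xm_mderivation).
rewrite exprS mulnS; apply: (iter_derivationM_eq0 XmD (mderivationM Xm_mderivation)) => //.
rewrite [iter _ _ _]/= Xm_zbp !(mderivationCM Xm_mderivation) Xm_x3 (morphDN XmD) Xm_zp.
by rewrite oppr0 !mulr0.
Qed.

Lemma iter_Xm_f0 k j : (2 * k < j)%N -> iter j Xm (f0 k) = 0.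
Proof.
move=> lt_2k_j; rewrite /f0 (iter_commute (mderivationCM Xm_mderivation _)).
have XmD := mderivationD Xm_mderivation.
by rewrite (iter_morphD_eq0 XmD _ _ _ lt_2k_j (iter_Xm_zbpX k)) mulr0.
Qed.

Lemma f0_coefS k :
  ((k.+1)`!%:R * 2 ^+ k.+1)^-1 * k.+1%:R = 2^-1 * (k`!%:R * 2 ^+ k)^-1 :> algC.
Proof.
rewrite factS natrM exprS; field.
by rewrite expf_neq0 ?pnatr_eq0 // -lt0n fact_gt0 addrC natr1 pnatr_eq0.
Qed.

Lemma mderivation_f0S {D} :
  mderivation D -> forall k, D (f0 k.+1) = 2^-1%:MP * D zbp * f0 k.
Proof.
move=> hD k; rewrite /f0 (mderivationCM hD) (mderivationX hD).
rewrite -[_ *+ k.+1]mulr_natr -mpolyC_nat.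
have -> : ((k.+1)`!%:R * 2 ^+ k.+1)^-1%:MP * (zbp ^+ k * D zbp * k.+1%:R%:MP)
    = (((k.+1)`!%:R * 2 ^+ k.+1)^-1 * k.+1%:R)%:MP * (zbp ^+ k * D zbp) :> Pol.
  by rewrite mpolyCM; ring.
by rewrite f0_coefS mpolyCM; ring.
Qed.

Lemma mpolyC_halfK (p : Pol) : 2^-1%:MP * (2%:MP * p) = p.
Proof. by rewrite mulrA -mpolyCM mulVf ?pnatr_eq0 // mpolyC1 mul1r. Qed.

Lemma Xm_f0S k : Xm (f0 k.+1) = x3 * f0 k.
Proof. by rewrite (mderivation_f0S Xm_mderivation) Xm_zbp mpolyC_halfK. Qed.

Lemma dzb_f0S k : dzb (f0 k.+1) *+ 2 = f0 k.
Proof.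
rewrite (mderivation_f0S dzb_mderivation) dzb_zbp mulr1 -mulrnAl -rmorphMn.
by rewrite -mulr_natr mulVf ?pnatr_eq0 // rmorph1 mul1r.
Qed.

Lemma d3_f0 k : d3 (f0 k) = 0.
Proof.
case: k => [|k]; last by rewrite (mderivation_f0S d3_mderivation) d3_zbp mulr0 mul0r.
rewrite /f0 (mderivationCM d3_mderivation) [zbp ^+ 0]expr0 -mpolyC1.
by rewrite (mderivation_cst d3_mderivation) mulr0.
Qed.

Lemma fkE k j : fk k j = iter j Xm (f0 k).
Proof. by rewrite /fk; case: leqP => // lt_2k_j; rewrite iter_Xm_f0. Qed.

Lemma liftopD {op} : {morph op : p q / p + q} -> {morph liftop op : U V / U + V}.
Proof. by move=> opD U V; apply/matrixP=> i j; rewrite !mxE opD. Qed.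

Lemma liftop_act {D} : mderivation D -> forall M V, liftop D (act M V) = act M (liftop D V).
Proof.
move=> hD M V; apply/matrixP=> i j; rewrite !mxE.
rewrite (big_morph D (mderivationD hD) (morphD0 (mderivationD hD))).
by apply: eq_bigr => k _; rewrite !mxE (mderivationCM hD).
Qed.

Lemma liftop_cst {D} : mderivation D -> forall p v, liftop D (p *: cst v) = D p *: cst v.
Proof.
by move=> hD p v; apply/matrixP=> i j; rewrite !mxE mulrC (mderivationCM hD) mulrC.
Qed.

Lemma iter_liftop_cst {D} : mderivation D ->
  forall n p v, iter n (liftop D) (p *: cst v) = iter n D p *: cst v.
Proof. by move=> hD; elim=> //= n IHn p v; rewrite IHn (liftop_cst hD). Qed.

Lemma actD M : {morph act M : U V / U + V}.
Proof. by move=> U V; rewrite /act mulmxDr. Qed.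

Lemma act_scale M a V : act M (a *: V) = a *: act M V.
Proof. by rewrite /act scalemxAr. Qed.

Lemma act_act M N V : act M (act N V) = act (M *m N) V.
Proof. by rewrite /act mulmxA (map_mxM (@mpolyC 3 algC)). Qed.

Lemma act_cst M v : act M (cst v) = cst (M *m v).
Proof. by rewrite /act /cst (map_mxM (@mpolyC 3 algC)). Qed.

Section TildeX.
Context {E : 'I_3 -> 'M[algC]_2}.
Hypothesis hE : forall a b : 'I_3, E a *m E b + E b *m E a = (- 2 * (a == b)%:R)%:M.

Lemma clifford_sqr a : E a *m E a = - 1%:M.
Proof.
have := hE a a; rewrite eqxx mulr1 -mulr2n -scaler_nat -scalemx1 => E2.
by apply: (scalerI (_ : 2 != 0 :> algC)); rewrite ?pnatr_eq0 // E2 scalerN scaleNr.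
Qed.

Lemma clifford_anticomm a b : a != b -> E a *m E b = - (E b *m E a).
Proof.
move=> /negbTE neq_ab; apply/eqP; rewrite -addr_eq0.
by rewrite hE neq_ab mulr0 -scalemx1 scale0r.
Qed.

Lemma clifford_bivector_sqr a b : a != b -> (E a *m E b) *m (E a *m E b) = - 1%:M.
Proof.
move=> neq_ab; rewrite mulmxA -(mulmxA (E a)) clifford_anticomm 1?eq_sym //.
by rewrite mulmxN mulmxA clifford_sqr !mulNmx mul1mx clifford_sqr opprK.
Qed.

Lemma omegam_sqr : omegam E *m omegam E = 0.
Proof.
have cross : (E i1 *m E i2) *m (E i2 *m E i0) = - ((E i2 *m E i0) *m (E i1 *m E i2)).
  rewrite mulmxA -(mulmxA (E i1)) clifford_sqr mulmxN mulmx1 mulNmx.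
  rewrite !mulmxA (clifford_anticomm i2 i0) // !mulNmx -(mulmxA (E i0)).
  rewrite (clifford_anticomm i2 i1) // mulmxN mulNmx -!mulmxA clifford_sqr.
  by rewrite (clifford_anticomm i1 i0) // !mulmxN mulmx1 !opprK.
rewrite /omegam -scalemxAl -scalemxAr mulmxDl !mulmxDr !mulNmx !mulmxN opprK.
rewrite -!scalemxAl -!scalemxAr !clifford_bivector_sqr // cross scalerN opprK.
by rewrite scalerA -expr2 sqrCi scaleN1r opprK -addrA addKr addNr !scaler0.
Qed.

Lemma XtD : {morph Xt E : U V / U + V}.
Proof. by move=> U V; rewrite /Xt (liftopD (mderivationD Xm_mderivation)) actD addrACA. Qed.

Lemma Xt_act V : Xt E (act (omegam E) V) = act (omegam E) (Xt E V).
Proof. by rewrite /Xt (liftop_act Xm_mderivation) actD. Qed.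

Lemma Xt_scale a V : Xt E (a *: V) = a *: Xt E V + Xm a *: V.
Proof.
rewrite /Xt act_scale scalerDr addrAC; congr (_ + _).
by apply/matrixP=> i j; rewrite !mxE (mderivationM Xm_mderivation) addrC.
Qed.

Lemma Xt_x3 V : Xt E (x3 *: V) = x3 *: Xt E V - zp *: V.
Proof. by rewrite Xt_scale Xm_x3 scaleNr. Qed.

Lemma Xt_zp V : Xt E (zp *: V) = zp *: Xt E V.
Proof. by rewrite Xt_scale Xm_zp scale0r addr0. Qed.

Lemma liftop_Xt {D} h V : mderivation D -> (forall p, D (Xm p) = Xm (D p) + h p) ->
  liftop D (Xt E V) = Xt E (liftop D V) + liftop h V.
Proof.
move=> hD DXm; rewrite /Xt (liftopD (mderivationD hD)) (liftop_act hD) addrAC.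
by congr (_ + _); apply/matrixP=> i j; rewrite !mxE DXm.
Qed.

Lemma d3_iter_Xt j V : liftop d3 (iter j (Xt E) V)
  = iter j (Xt E) (liftop d3 V) + iter j.-1 (Xt E) (liftop dzb V) *+ (2 * j).
Proof.
have d3_Xt U : liftop d3 (Xt E U) = Xt E (liftop d3 U) + liftop dzb U *+ 2.
  rewrite (liftop_Xt _ _ d3_mderivation d3_Xm); congr (_ + _).
  by apply/matrixP=> i k; rewrite !(mxE, mulmxnE).
have dzb_Xt U : Xt E (liftop dzb U *+ 2) = liftop dzb (Xt E U) *+ 2.
  have dzbXm p : dzb (Xm p) = Xm (dzb p) + 0 by rewrite addr0 dzb_Xm.
  rewrite (morphDMn XtD) (liftop_Xt _ _ dzb_mderivation dzbXm).
  have -> : liftop (fun=> 0) U = 0 by apply/matrixP=> i k; rewrite !mxE.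
  by rewrite addr0.
by rewrite (iter_commutator XtD d3_Xt dzb_Xt) (iter_morphDMn XtD) -mulrnA.
Qed.

Lemma x3_iter_Xt j V :
  x3 *: iter j (Xt E) V = iter j (Xt E) (x3 *: V) + iter j.-1 (Xt E) (zp *: V) *+ j.
Proof.
have x3_Xt U : x3 *: Xt E U = Xt E (x3 *: U) + zp *: U by rewrite Xt_x3 subrK.
exact: (iter_commutator XtD x3_Xt Xt_zp).
Qed.

Lemma Xt_f0S_cst v k :
  Xt E (f0 k.+1 *: cst v) = x3 *: (f0 k *: cst v) + act (omegam E) (f0 k.+1 *: cst v).
Proof. by rewrite /Xt (liftop_cst Xm_mderivation) Xm_f0S scalerA. Qed.

Lemma Fk_succ v k j : Fk E v k.+1 j.+1
  = x3 *: Fk E v k j - (zp *: Fk E v k j.-1) *+ j + act (omegam E) (Fk E v k.+1 j).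
Proof.
rewrite /Fk iterSr Xt_f0S_cst (iter_morphD XtD) (iter_commute Xt_act).
by rewrite x3_iter_Xt (iter_commute Xt_zp) addrK.
Qed.

Lemma d3_Fk v k j : liftop d3 (Fk E v k.+1 j) = Fk E v k j.-1 *+ j.
Proof.
rewrite /Fk d3_iter_Xt (liftop_cst d3_mderivation) d3_f0 scale0r (iter_morphD0 XtD).
by rewrite add0r (liftop_cst dzb_mderivation) mulrnA -(iter_morphDMn XtD) scalerMnl dzb_f0S.
Qed.

Lemma iter_Xt j V : iter j (Xt E) V
  = iter j (liftop Xm) V + iter j.-1 (liftop Xm) (act (omegam E) V) *+ j.
Proof.
have omegam_nil U : act (omegam E) (act (omegam E) U) = 0.
  by rewrite act_act omegam_sqr /act (map_mx0 (@mpolyC 3 algC)) mul0mx.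
exact: (iter_add_nilpotent (liftopD (mderivationD Xm_mderivation)) (actD _)
  (liftop_act Xm_mderivation _) omegam_nil (fun => erefl)).
Qed.

Lemma Fk_expand v k j : Fk E v k j
  = iter j Xm (f0 k) *: cst v + (iter j.-1 Xm (f0 k) *: cst (omegam E *m v)) *+ j.
Proof. by rewrite /Fk iter_Xt act_scale act_cst !(iter_liftop_cst Xm_mderivation). Qed.

Lemma Fk_eq0 v k j : (2 * k + 1 < j)%N -> Fk E v k j = 0.
Proof. by move=> lt_j; rewrite Fk_expand !iter_Xm_f0 ?scale0r ?mul0rn ?addr0 //; lia. Qed.

End TildeX.

Theorem theorem3p2 (E : 'I_3 -> 'M[algC]_2) (vp : 'cV[algC]_2) :
  (* Clifford relations e_j e_l + e_l e_j = -2 delta_{jl}: C^2 is then an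
     irreducible C_3-module, i.e. a realization of the spinor module S *)
  (forall a b : 'I_3, E a *m E b + E b *m E a = (- 2 * (a == b)%:R)%:M) ->
  vp != 0 ->
  - 'i *: (E i0 *m E i1 *m vp) = vp ->
  (* (a) *)
  ((forall j : nat, (0 < j)%N -> forall V : SPol,
      iter j (Xt E) V
      = iter j (liftop Xm) V + iter j.-1 (liftop Xm) (act (omegam E) V) *+ j)
   /\ (forall k j : nat, (j <= 2 * k + 1)%N ->
      Fk E vp k j = fk k j *: cst vp + (fk k j.-1 *: cst (omegam E *m vp)) *+ j))
  /\
  (* (b) *)
  ((forall j : nat, (0 < j)%N -> forall V : SPol,
      liftop d3 (iter j (Xt E) V) - iter j (Xt E) (liftop d3 V)
      = iter j.-1 (Xt E) (liftop dzb V) *+ (2 * j))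
   /\ (forall k j : nat, (0 < k)%N -> (j <= 2 * k + 1)%N ->
      liftop d3 (Fk E vp k j)
      = if (1 <= j <= 2 * k)%N then Fk E vp k.-1 j.-1 *+ j else 0))
  /\
  (* (c) *)
  ((forall j : nat, (0 < j)%N -> forall V : SPol,
      x3 *: iter j (Xt E) V - iter j (Xt E) (x3 *: V)
      = iter j.-1 (Xt E) (zp *: V) *+ j)
   /\ (forall k j : nat, (j <= 2 * k + 1)%N ->
      Fk E vp k.+1 j.+1
      = x3 *: Fk E vp k j - (zp *: Fk E vp k j.-1) *+ j + act (omegam E) (Fk E vp k.+1 j))).
Proof.
move=> hE _ _.
split; [split | split; [split | split]].
- by move=> j _ V; apply: iter_Xt.
- by move=> k j _; rewrite (Fk_expand hE) !fkE.
- by move=> j _ V; rewrite d3_iter_Xt addrAC subrr add0r.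
- move=> [|k] // j _ le_j; rewrite d3_Fk; case: ifP => // /negbT out_j.
  have [->|lt_j] : j = 0%N \/ (2 * k + 1 < j.-1)%N by lia.
    by rewrite mulr0n.
  by rewrite (Fk_eq0 hE) // mul0rn.
- by move=> j _ V; rewrite x3_iter_Xt addrAC subrr add0r.
- by move=> k j _; apply: Fk_succ.
Qed.
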